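(* Let $\mathcal{D}_1,\mathcal{D}_2$ be fermionically dagger compact categories (each a symmetric monoidal dagger category with duals and with a unitary monoidal $B\mathbb{Z}/2$-action $(-1)^F$), and let $F\colon \mathcal{D}_1\to\mathcal{D}_2$ be a symmetric monoidal dagger functor. Suppose that every iso-positive involution in $\mathcal{D}_2$ is the identity. Then $F$ is $B\mathbb{Z}/2$-equivariant, i.e. $F\big((-1)^F_x\big)=(-1)^F_{F(x)}$ for every object $x$ of $\mathcal{D}_1$.
   Context: A dagger category is a category $\mathcal{D}$ with a functor $\dagger\colon\mathcal{D}\to\mathcal{D}^{\mathrm{op}}$ which is the identity on objects and satisfies $f^{\dagger\dagger}=f$. An isomorphism $f$ is unitary if $f^\dagger=f^{-1}$. An endomorphism $f\colon c\to c$ is iso-positive if $f=g^\dagger g$ for some isomorphism $g\colon c\to c'$; an involution is an endomorphism $j$ with $j\circ j=\mathrm{id}$. A dagger functor satisfies $F(f^\dagger)=F(f)^\dagger$. A symmetric monoidal dagger category is a dagger category with a symmetric monoidal structure such that $(f\otimes g)^\dagger=f^\dagger\otimes g^\dagger$ and the associator, unitors and braiding $\sigma$ are unitary; a symmetric monoidal dagger functor is a symmetric monoidal functor which is a dagger functor and whose structure isomorphisms $F(x)\otimes F(y)\to F(x\otimes y)$, $1\to F(1)$ are unitary. A unitary monoidal $B\mathbb{Z}/2$-action on $\mathcal{D}$ is a natural automorphism $(-1)^F$ of the identity functor with $(-1)^F_x\circ(-1)^F_x=\mathrm{id}_x$, $(-1)^F_{x\otimes y}=(-1)^F_x\otimes(-1)^F_y$,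 $(-1)^F_1=\mathrm{id}$, and each $(-1)^F_x$ unitary. Duals: choose for each object $x$ a dual $x^*$ with $\mathrm{ev}_x\colon x^*\otimes x\to 1$, $\mathrm{coev}_x\colon 1\to x\otimes x^*$ satisfying the triangle identities; the dual of $f\colon x\to y$ is the unique $f^*\colon y^*\to x^*$ with $\mathrm{ev}_x\circ(f^*\otimes\mathrm{id}_x)=\mathrm{ev}_y\circ(\mathrm{id}_{y^*}\otimes f)$. Define the automorphism $\lambda_x$ of $x^*$ (suppressing associators and unitors) by $\lambda_x=(\mathrm{coev}_x^\dagger\otimes\mathrm{id}_{x^*})\circ(\sigma_{x^*,x}\otimes\mathrm{id}_{x^*})\circ(\mathrm{id}_{x^*}\otimes\mathrm{coev}_x)$. A symmetric monoidal dagger category with duals and unitary monoidal $B\mathbb{Z}/2$-action is fermionically dagger compact if for every object $x$ and every iso-positive automorphism $h$ of $x$, the automorphism $\lambda_x\circ(h^* )^{-1}\circ(-1)^F_{x^*}$ of $x^*$ is iso-positive (with respect to the chosen duals). *)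

Set Implicit Arguments.
Unset Strict Implicit.

Record SMDagCat : Type := {
  Ob : Type;
  Hom : Ob -> Ob -> Type;
  idm : forall a, Hom a a;
  comp : forall {a b c : Ob}, Hom b c -> Hom a b -> Hom a c;
  comp_idl : forall a b (f : Hom a b), comp (idm b) f = f;
  comp_idr : forall a b (f : Hom a b), comp f (idm a) = f;
  comp_assoc : forall a b c d (f : Hom a b) (g : Hom b c) (h : Hom c d),
      comp h (comp g f) = comp (comp h g) f;
  dag : forall {a b : Ob}, Hom a b -> Hom b a;
  dag_comp : forall a b c (f : Hom a b) (g : Hom b c),
      dag (comp g f) = comp (dag f) (dag g);
  dag_id : forall a, dag (idm a) = idm a;
  dag_invol : forall a b (f : Hom a b), dag (dag f) = f;
  tens : Ob -> Ob -> Ob;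
  tensm : forall {a b c d : Ob}, Hom a b -> Hom c d -> Hom (tens a c) (tens b d);
  unit : Ob;
  assoc : forall a b c, Hom (tens (tens a b) c) (tens a (tens b c));
  lunit : forall a, Hom (tens unit a) a;
  runit : forall a, Hom (tens a unit) a;
  braid : forall a b, Hom (tens a b) (tens b a);
  tens_id : forall a b, tensm (idm a) (idm b) = idm (tens a b);
  tens_comp : forall a b c a' b' c' (f : Hom a b) (g : Hom b c)
      (f' : Hom a' b') (g' : Hom b' c'),
      tensm (comp g f) (comp g' f') = comp (tensm g g') (tensm f f');
  assoc_nat : forall a b c d e f (x : Hom a b) (y : Hom c d) (z : Hom e f),
      comp (assoc b d f) (tensm (tensm x y) z)
      = comp (tensm x (tensm y z)) (assoc a c e);
  lunit_nat : forall a b (f : Hom a b),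
      comp (lunit b) (tensm (idm unit) f) = comp f (lunit a);
  runit_nat : forall a b (f : Hom a b),
      comp (runit b) (tensm f (idm unit)) = comp f (runit a);
  braid_nat : forall a b c d (f : Hom a b) (g : Hom c d),
      comp (braid b d) (tensm f g) = comp (tensm g f) (braid a c);
  pentagon : forall a b c d,
      comp (assoc a b (tens c d)) (assoc (tens a b) c d)
      = comp (tensm (idm a) (assoc b c d))
          (comp (assoc a (tens b c) d) (tensm (assoc a b c) (idm d)));
  triangle : forall a b,
      comp (tensm (idm a) (lunit b)) (assoc a unit b)
      = tensm (runit a) (idm b);
  hexagon : forall a b c,
      comp (assoc b c a) (comp (braid a (tens b c)) (assoc a b c))
      = comp (tensm (idm b) (braid a c))
          (comp (assoc b a c) (tensm (braid a b) (idm c)));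
  braid_sym : forall a b, comp (braid b a) (braid a b) = idm (tens a b);
  dag_tens : forall a b c d (f : Hom a b) (g : Hom c d),
      dag (tensm f g) = tensm (dag f) (dag g);
  assoc_unitary : forall a b c,
      comp (dag (assoc a b c)) (assoc a b c) = idm _ /\
      comp (assoc a b c) (dag (assoc a b c)) = idm _;
  lunit_unitary : forall a,
      comp (dag (lunit a)) (lunit a) = idm _ /\ comp (lunit a) (dag (lunit a)) = idm _;
  runit_unitary : forall a,
      comp (dag (runit a)) (runit a) = idm _ /\ comp (runit a) (dag (runit a)) = idm _;
  braid_unitary : forall a b,
      comp (dag (braid a b)) (braid a b) = idm _ /\
      comp (braid a b) (dag (braid a b)) = idm _
}.

Arguments Hom : clear implicits.
Arguments idm {C} a : rename.
Arguments comp {C a b c} g f : rename.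
Arguments dag {C a b} f : rename.
Arguments tens {C} a b : rename.
Arguments tensm {C a b c d} f g : rename.
Arguments unit {C} : rename.
Arguments assoc {C} a b c : rename.
Arguments lunit {C} a : rename.
Arguments runit {C} a : rename.
Arguments braid {C} a b : rename.

Definition is_iso (C : SMDagCat) (a b : Ob C) (f : Hom C a b) : Prop :=
  exists g : Hom C b a, comp g f = idm a /\ comp f g = idm b.

Definition iso_positive (C : SMDagCat) (c : Ob C) (f : Hom C c c) : Prop :=
  exists (c' : Ob C) (g : Hom C c c'), is_iso g /\ f = comp (dag g) g.

Record FermCat : Type := {
  base :> SMDagCat;
  dualo : Ob base -> Ob base;
  ev : forall x, Hom base (tens (dualo x) x) unit;
  coev : forall x, Hom base unit (tens x (dualo x));
  zigzag_l : forall x,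
      comp (runit x)
        (comp (tensm (idm x) (ev x))
           (comp (assoc x (dualo x) x)
              (comp (tensm (coev x) (idm x)) (dag (lunit x))))) = idm x;
  zigzag_r : forall x,
      comp (lunit (dualo x))
        (comp (tensm (ev x) (idm (dualo x)))
           (comp (dag (assoc (dualo x) x (dualo x)))
              (comp (tensm (idm (dualo x)) (coev x)) (dag (runit (dualo x))))))
      = idm (dualo x);
  par : forall x, Hom base x x;
  par_nat : forall a b (f : Hom base a b), comp (par b) f = comp f (par a);
  par_invol : forall x, comp (par x) (par x) = idm x;
  par_tens : forall x y, par (tens x y) = tensm (par x) (par y);
  par_unit : par unit = idm unit;
  par_unitary : forall x,
      comp (dag (par x)) (par x) = idm x /\ comp (par x) (dag (par x)) = idm x
}.

Arguments dualo {f} x : rename.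
Arguments ev {f} x : rename.
Arguments coev {f} x : rename.
Arguments par {f} x : rename.

(* g : y^* -> x^* is the dual of f : x -> y (with respect to the chosen duals):
   ev_x o (g (x) id_x) = ev_y o (id_{y^*} (x) f).  It is unique when it exists. *)
Definition is_dual_mor (C : FermCat) (x y : Ob C) (f : Hom C x y)
    (g : Hom C (dualo y) (dualo x)) : Prop :=
  comp (ev x) (tensm g (idm x)) = comp (ev y) (tensm (idm (dualo y)) f).

Definition lam (C : FermCat) (x : Ob C) : Hom C (dualo x) (dualo x) :=
  comp (lunit (dualo x))
   (comp (tensm (dag (coev x)) (idm (dualo x)))
    (comp (tensm (braid (dualo x) x) (idm (dualo x)))
     (comp (dag (assoc (dualo x) x (dualo x)))
      (comp (tensm (idm (dualo x)) (coev x))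
            (dag (runit (dualo x))))))).

(* For every x and iso-positive h : x -> x, the automorphism
   lambda_x o inv(h^dual) o (-1)^F_{x^*} is iso-positive.  Here h^* is the
   (unique) dual morphism and inv(h^dual) its (unique) inverse. *)
Definition fermionically_dagger_compact (C : FermCat) : Prop :=
  forall (x : Ob C) (h : Hom C x x), iso_positive h ->
  forall (hs : Hom C (dualo x) (dualo x)), is_dual_mor h hs ->
  forall (hsi : Hom C (dualo x) (dualo x)),
    comp hsi hs = idm _ -> comp hs hsi = idm _ ->
    iso_positive (comp (lam x) (comp hsi (par (dualo x)))).

Record SMDagFunctor (C D : SMDagCat) : Type := {
  Fo : Ob C -> Ob D;
  Fm : forall {a b : Ob C}, Hom C a b -> Hom D (Fo a) (Fo b);
  Fm_id : forall a, Fm (idm a) = idm (Fo a);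
  Fm_comp : forall a b c (f : Hom C a b) (g : Hom C b c),
      Fm (comp g f) = comp (Fm g) (Fm f);
  Fm_dag : forall a b (f : Hom C a b), Fm (dag f) = dag (Fm f);
  mu : forall x y, Hom D (tens (Fo x) (Fo y)) (Fo (tens x y));
  eps : Hom D unit (Fo unit);
  mu_nat : forall a b c d (f : Hom C a b) (g : Hom C c d),
      comp (Fm (tensm f g)) (mu a c) = comp (mu b d) (tensm (Fm f) (Fm g));
  mu_unitary : forall x y,
      comp (dag (mu x y)) (mu x y) = idm _ /\ comp (mu x y) (dag (mu x y)) = idm _;
  eps_unitary : comp (dag eps) eps = idm _ /\ comp eps (dag eps) = idm _;
  F_assoc : forall x y z,
      comp (Fm (assoc x y z)) (comp (mu (tens x y) z) (tensm (mu x y) (idm (Fo z))))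
      = comp (mu x (tens y z))
          (comp (tensm (idm (Fo x)) (mu y z)) (assoc (Fo x) (Fo y) (Fo z)));
  F_lunit : forall x,
      comp (Fm (lunit x)) (comp (mu unit x) (tensm eps (idm (Fo x)))) = lunit (Fo x);
  F_runit : forall x,
      comp (Fm (runit x)) (comp (mu x unit) (tensm (idm (Fo x)) eps)) = runit (Fo x);
  F_braid : forall x y,
      comp (Fm (braid x y)) (mu x y) = comp (mu y x) (braid (Fo x) (Fo y))
}.

Arguments Fo {C D} F x : rename.
Arguments Fm {C D} F {a b} f : rename.


(* Taking h = id in fermionic dagger compactness shows that lam x ∘ (-1)^F is iso-positive
   on every chosen dual x^*.  F carries the chosen dual of x to a dual of F x, which differs
   from the chosen dual of F x by an isomorphism psi, and lambda transforms as
   psi ∘ lambda ∘ psi†.  Hence F (lam x) composed with either F((-1)^F) or the parity of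
   F x^* is iso-positive.  For commuting involutions k, p with l ∘ k and l ∘ p
   iso-positive, k ∘ p is conjugate to an iso-positive involution, which the hypothesis
   forces to be the identity.  Finally a morphism on F x is determined by its
   transpose along the evaluation, and ev ∘ ((-1)^F ⊗ (-1)^F) = ev moves the parity from
   x^* to x. *)

Local Notation "g ∘ f" := (comp g f) (at level 40, left associativity).
Local Notation "f ⊗ g" := (tensm f g) (at level 35).
Local Notation "f †" := (dag f) (at level 9).

Ltac assocr := repeat rewrite <- comp_assoc.

Section Composites.
Context {C : SMDagCat}.

Lemma comp_rw2 {a b c : Ob C} {f : Hom C a b} {g : Hom C b c} {h : Hom C a c} :
  g ∘ f = h -> forall d (r : Hom C d a), g ∘ (f ∘ r) = h ∘ r.
Proof. intros H d r. rewrite comp_assoc, H. reflexivity. Qed.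

Lemma comp_rw3 {a b c e : Ob C} {f : Hom C a b} {g : Hom C b c} {k : Hom C c e}
  {h : Hom C a e} :
  k ∘ (g ∘ f) = h -> forall d (r : Hom C d a), k ∘ (g ∘ (f ∘ r)) = h ∘ r.
Proof. intros H d r. rewrite <- H. rewrite !comp_assoc. reflexivity. Qed.

Lemma comp_rw4 {a b c e i : Ob C} {f : Hom C a b} {g : Hom C b c} {k : Hom C c e}
  {l : Hom C e i} {h : Hom C a i} :
  l ∘ (k ∘ (g ∘ f)) = h -> forall d (r : Hom C d a), l ∘ (k ∘ (g ∘ (f ∘ r))) = h ∘ r.
Proof. intros H d r. rewrite <- H. rewrite !comp_assoc. reflexivity. Qed.

End Composites.

(* [crw H] rewrites with an equation [H : g_n ∘ ... ∘ g_1 = h], [n <= 4], inside a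
   right-nested composite, whatever the bracketing of [H]. *)
Ltac crw H := let H' := fresh in pose proof H as H'; repeat rewrite <- comp_assoc in H';
  first [ rewrite (comp_rw4 H') | rewrite (comp_rw3 H') | rewrite (comp_rw2 H') | rewrite H' ];
  clear H'; assocr.
Ltac crwl H := crw (eq_sym H).

Section Monoidal.
Context {C : SMDagCat}.

Lemma tens_comp_merge {a b c a' b' c' : Ob C} {f : Hom C a b} {g : Hom C b c}
  {f' : Hom C a' b'} {g' : Hom C b' c'} :
  (g ⊗ g') ∘ (f ⊗ f') = (g ∘ f) ⊗ (g' ∘ f').
Proof. rewrite tens_comp. reflexivity. Qed.

Lemma tens_comp_merge_r {a b c a' b' c' : Ob C} {f : Hom C a b} {g : Hom C b c}
  {f' : Hom C a' b'} {g' : Hom C b' c'} d (r : Hom C d _) :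
  (g ⊗ g') ∘ ((f ⊗ f') ∘ r) = ((g ∘ f) ⊗ (g' ∘ f')) ∘ r.
Proof. rewrite comp_assoc, tens_comp. reflexivity. Qed.

Lemma tens_idl_comp (u : Ob C) a b c (f : Hom C a b) (g : Hom C b c) :
  idm u ⊗ (g ∘ f) = (idm u ⊗ g) ∘ (idm u ⊗ f).
Proof. rewrite <- tens_comp, comp_idl. reflexivity. Qed.

Lemma tens_idr_comp (u : Ob C) a b c (f : Hom C a b) (g : Hom C b c) :
  (g ∘ f) ⊗ idm u = (g ⊗ idm u) ∘ (f ⊗ idm u).
Proof. rewrite <- tens_comp, comp_idl. reflexivity. Qed.

Lemma interchange {a b a' b' : Ob C} (f : Hom C a b) (g : Hom C a' b') :
  (f ⊗ idm b') ∘ (idm a ⊗ g) = (idm b ⊗ g) ∘ (f ⊗ idm a').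
Proof. rewrite <- !tens_comp, !comp_idl, !comp_idr. reflexivity. Qed.

Lemma comp_cancel_r {a b c} {f g : Hom C b c} {w : Hom C a b} {wi : Hom C b a} :
  w ∘ wi = idm b -> f ∘ w = g ∘ w -> f = g.
Proof.
  intros Hw E. rewrite <- (comp_idr f), <- (comp_idr g), <- Hw, !comp_assoc, E.
  reflexivity.
Qed.

Lemma comp_cancel_l {a b c} {f g : Hom C a b} {w : Hom C b c} {wi : Hom C c b} :
  wi ∘ w = idm b -> w ∘ f = w ∘ g -> f = g.
Proof.
  intros Hw E. rewrite <- (comp_idl f), <- (comp_idl g), <- Hw, <- !comp_assoc, E.
  reflexivity.
Qed.

Lemma comp_solve_r {a b c} {f : Hom C b c} {g : Hom C a c} {w : Hom C a b}
  {wi : Hom C b a} :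
  w ∘ wi = idm b -> f ∘ w = g -> f = g ∘ wi.
Proof. intros Hw E. rewrite <- E, <- comp_assoc, Hw, comp_idr. reflexivity. Qed.

Lemma assoc_unitary_l (a b c : Ob C) : (assoc a b c)† ∘ assoc a b c = idm _.
Proof. apply assoc_unitary. Qed.
Lemma assoc_unitary_r (a b c : Ob C) : assoc a b c ∘ (assoc a b c)† = idm _.
Proof. apply assoc_unitary. Qed.
Lemma lunit_unitary_l (a : Ob C) : (lunit a)† ∘ lunit a = idm (tens unit a).
Proof. apply lunit_unitary. Qed.
Lemma lunit_unitary_r (a : Ob C) : lunit a ∘ (lunit a)† = idm a.
Proof. apply lunit_unitary. Qed.
Lemma runit_unitary_r (a : Ob C) : runit a ∘ (runit a)† = idm a.
Proof. apply runit_unitary. Qed.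

Lemma assoc_dag_nat {a b c d e f} (x : Hom C a b) (y : Hom C c d) (z : Hom C e f) :
  (assoc b d f)† ∘ (x ⊗ (y ⊗ z)) = ((x ⊗ y) ⊗ z) ∘ (assoc a c e)†.
Proof.
  pose proof (f_equal dag (assoc_nat x† y† z†)) as E.
  rewrite !dag_comp, !dag_tens, !dag_invol in E. symmetry. exact E.
Qed.

Lemma lunit_dag_nat {a b} (f : Hom C a b) :
  (lunit b)† ∘ f = (idm unit ⊗ f) ∘ (lunit a)†.
Proof.
  pose proof (f_equal dag (lunit_nat f†)) as E.
  rewrite !dag_comp, !dag_tens, dag_id, !dag_invol in E. symmetry. exact E.
Qed.

Lemma runit_dag_nat {a b} (f : Hom C a b) :
  (runit b)† ∘ f = (f ⊗ idm unit) ∘ (runit a)†.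
Proof.
  pose proof (f_equal dag (runit_nat f†)) as E.
  rewrite !dag_comp, !dag_tens, dag_id, !dag_invol in E. symmetry. exact E.
Qed.

End Monoidal.

Ltac tmerge := repeat (first [rewrite tens_comp_merge_r | rewrite tens_comp_merge]);
  repeat rewrite comp_idl; repeat rewrite comp_idr.

Section Coherence.
Context {C : SMDagCat}.

Lemma tens_idl_inj a b (f g : Hom C a b) : idm unit ⊗ f = idm unit ⊗ g -> f = g.
Proof.
  intro E. apply (comp_cancel_r (lunit_unitary_r a)).
  crwl (lunit_nat f). rewrite E. crw (lunit_nat g). reflexivity.
Qed.

Lemma tens_idr_inj a b (f g : Hom C a b) : f ⊗ idm unit = g ⊗ idm unit -> f = g.
Proof.
  intro E. apply (comp_cancel_r (runit_unitary_r a)).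
  crwl (runit_nat f). rewrite E. crw (runit_nat g). reflexivity.
Qed.

Lemma lunit_tens_assoc (a b : Ob C) :
  lunit (tens a b) ∘ assoc unit a b = lunit a ⊗ idm b.
Proof.
  apply tens_idl_inj.
  apply (comp_cancel_r (w := assoc unit (tens unit a) b ∘ (assoc unit unit a ⊗ idm b))
                       (wi := ((assoc unit unit a)† ⊗ idm b) ∘ (assoc _ _ _)†)).
  { assocr. tmerge. rewrite assoc_unitary_r, tens_id, comp_idl, assoc_unitary_r.
    reflexivity. }
  rewrite tens_idl_comp. assocr. crwl (pentagon unit unit a b).
  crw (triangle unit (tens a b)).
  crwl (assoc_nat (idm unit) (lunit a) (idm b)). tmerge. rewrite triangle.
  rewrite <- (tens_id a b). crwl (assoc_nat (runit (@unit C)) (idm a) (idm b)).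
  reflexivity.
Qed.

Lemma runit_tens_assoc (a b : Ob C) :
  (idm a ⊗ runit b) ∘ assoc a b unit = runit (tens a b).
Proof.
  apply tens_idr_inj.
  apply (comp_cancel_l (assoc_unitary_l a b unit)).
  rewrite tens_idr_comp. crw (assoc_nat (idm a) (runit b) (idm (@unit C))).
  rewrite <- (triangle b unit), tens_idl_comp. assocr.
  crwl (pentagon a b (@unit C) unit).
  crwl (assoc_nat (idm a) (idm b) (lunit (@unit C))). rewrite tens_id.
  crw (triangle (tens a b) unit). reflexivity.
Qed.

Lemma lunit_runit_unit : lunit (@unit C) = runit unit.
Proof.
  assert (E : lunit (tens (@unit C) unit) = idm unit ⊗ lunit unit).
  { apply (comp_cancel_l (lunit_unitary_l (@unit C))).
    rewrite (lunit_nat (lunit (@unit C))). reflexivity. }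
  apply tens_idr_inj. rewrite <- (triangle unit unit), <- lunit_tens_assoc, E.
  reflexivity.
Qed.

Lemma lunit_tens_assoc_dag (a b : Ob C) :
  (assoc unit a b)† ∘ (lunit (tens a b))† = (lunit a)† ⊗ idm b.
Proof. rewrite <- dag_comp, lunit_tens_assoc, dag_tens, dag_id. reflexivity. Qed.

Lemma runit_tens_assoc_dag (a b : Ob C) :
  idm a ⊗ (runit b)† = assoc a b unit ∘ (runit (tens a b))†.
Proof.
  rewrite <- runit_tens_assoc, dag_comp, dag_tens, dag_id. assocr.
  crw (assoc_unitary_r a b unit). rewrite comp_idl. reflexivity.
Qed.

Lemma pentagon_dag (a b c d : Ob C) :
  (idm a ⊗ (assoc b c d)†) ∘ assoc a b (tens c d)
  = assoc a (tens b c) d ∘ ((assoc a b c ⊗ idm d) ∘ (assoc (tens a b) c d)†).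
Proof.
  apply (comp_cancel_r (assoc_unitary_r (tens a b) c d)).
  assocr. rewrite pentagon, assoc_unitary_l, comp_idr. tmerge.
  rewrite assoc_unitary_l, tens_id, comp_idl. reflexivity.
Qed.

End Coherence.

Section Duals.
Context {C : SMDagCat}.

Definition snake_l {y d : Ob C} (c : Hom C unit (tens y d)) (e : Hom C (tens d y) unit) :=
  runit y ∘ ((idm y ⊗ e) ∘ (assoc y d y ∘ ((c ⊗ idm y) ∘ (lunit y)†))) = idm y.

Definition snake_r {y d : Ob C} (c : Hom C unit (tens y d)) (e : Hom C (tens d y) unit) :=
  lunit d ∘ ((e ⊗ idm d) ∘ ((assoc d y d)† ∘ ((idm d ⊗ c) ∘ (runit d)†))) = idm d.

(* The comparison map between two duals [d'] and [d] of [y]; [snake_r c e] says that it is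
   the identity when the two duals coincide. *)
Definition dual_transfer {y d d' : Ob C} (c : Hom C unit (tens y d))
    (e' : Hom C (tens d' y) unit) : Hom C d' d :=
  lunit d ∘ ((e' ⊗ idm d) ∘ ((assoc d' y d)† ∘ ((idm d' ⊗ c) ∘ (runit d')†))).

Lemma dual_transfer_coev {y d d' : Ob C} (c' : Hom C unit (tens y d'))
    (e' : Hom C (tens d' y) unit) (c : Hom C unit (tens y d)) :
  snake_l c' e' -> (idm y ⊗ dual_transfer c e') ∘ c' = c.
Proof.
  intro Z. unfold dual_transfer. symmetry.
  transitivity (((runit y ∘ ((idm y ⊗ e') ∘ (assoc y d' y ∘ ((c' ⊗ idm y) ∘ (lunit y)†))))
                   ⊗ idm d) ∘ c).
  { rewrite Z, tens_id, comp_idl. reflexivity. }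
  rewrite !tens_idr_comp. assocr. crwl (lunit_tens_assoc_dag y d).
  crw (lunit_dag_nat c). crwl (assoc_dag_nat c' (idm y) (idm d)). rewrite tens_id.
  crw (interchange c' c). rewrite !tens_idl_comp. assocr.
  rewrite runit_tens_assoc_dag. assocr. crw (runit_dag_nat c').
  crwl (assoc_nat (idm y) (idm d') c). rewrite tens_id, <- lunit_runit_unit.
  crw (pentagon_dag y d' y d). crwl (assoc_nat (idm y) e' (idm d)).
  crw (triangle y d). reflexivity.
Qed.

Lemma coev_fixed_id {y d : Ob C} (c : Hom C unit (tens y d)) (e : Hom C (tens d y) unit)
    (u : Hom C d d) :
  snake_r c e -> (idm y ⊗ u) ∘ c = c -> u = idm d.
Proof.
  intros Z Hu. rewrite <- (comp_idr u), <- Z. assocr.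
  crwl (lunit_nat u). crwl (interchange e u). rewrite <- (tens_id d y).
  crwl (assoc_dag_nat (idm d) (idm y) u). crwl (tens_idl_comp d _ _ _ c (idm y ⊗ u)).
  rewrite Hu. reflexivity.
Qed.

Lemma dual_transfer_iso {y d1 d2 : Ob C}
    (c1 : Hom C unit (tens y d1)) (e1 : Hom C (tens d1 y) unit)
    (c2 : Hom C unit (tens y d2)) (e2 : Hom C (tens d2 y) unit) :
  snake_l c1 e1 -> snake_r c1 e1 -> snake_l c2 e2 -> snake_r c2 e2 ->
  is_iso (dual_transfer c2 e1).
Proof.
  intros Zl1 Zr1 Zl2 Zr2. exists (dual_transfer c1 e2).
  split; [apply (coev_fixed_id c1 e1) | apply (coev_fixed_id c2 e2)]; auto;
    rewrite tens_idl_comp; assocr.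
  - crw (dual_transfer_coev c1 e1 c2 Zl1). apply (dual_transfer_coev c2 e2 c1 Zl2).
  - crw (dual_transfer_coev c2 e2 c1 Zl2). apply (dual_transfer_coev c1 e1 c2 Zl1).
Qed.

(* [lam x] is [lam_of (coev x)] by conversion. *)
Definition lam_of {y d : Ob C} (c : Hom C unit (tens y d)) : Hom C d d :=
  lunit d ∘ ((c† ⊗ idm d) ∘ ((braid d y ⊗ idm d) ∘ ((assoc d y d)† ∘
    ((idm d ⊗ c) ∘ (runit d)†)))).

Lemma lam_of_conj {y d' d : Ob C} (c : Hom C unit (tens y d')) (psi : Hom C d' d) :
  lam_of ((idm y ⊗ psi) ∘ c) = psi ∘ (lam_of c ∘ psi†).
Proof.
  unfold lam_of. rewrite dag_comp, dag_tens, dag_id, (tens_idl_comp d). assocr.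
  crw (assoc_dag_nat (idm d) (idm y) psi). rewrite tens_id.
  crw (interchange (braid d y) psi). crw (interchange (c† ∘ (idm y ⊗ psi†)) psi).
  crw (lunit_nat psi). rewrite tens_idr_comp. assocr.
  assert (E : ((idm y ⊗ psi†) ⊗ idm d') ∘ (braid d y ⊗ idm d')
              = (braid d' y ⊗ idm d') ∘ ((psi† ⊗ idm y) ⊗ idm d')).
  { rewrite !tens_comp_merge, braid_nat. reflexivity. }
  crw E. crwl (assoc_dag_nat psi† (idm y) (idm d')). rewrite tens_id.
  crw (interchange psi† c). crwl (runit_dag_nat psi†). reflexivity.
Qed.

Lemma ev_tens_inj {y d : Ob C} (c : Hom C unit (tens y d)) (e : Hom C (tens d y) unit)
    (t t' : Hom C y y) :
  snake_l c e -> e ∘ (idm d ⊗ t) = e ∘ (idm d ⊗ t') -> t = t'.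
Proof.
  intros Z E.
  assert (transpose : forall s : Hom C y y,
    s = runit y ∘ ((idm y ⊗ (e ∘ (idm d ⊗ s))) ∘ (assoc y d y ∘ ((c ⊗ idm y) ∘ (lunit y)†)))).
  { intro s.
    transitivity ((runit y ∘ ((idm y ⊗ e) ∘ (assoc y d y ∘ ((c ⊗ idm y) ∘ (lunit y)†)))) ∘ s).
    { rewrite Z, comp_idl. reflexivity. }
    assocr.
    crw (lunit_dag_nat s). crw (interchange c s). rewrite <- (tens_id y d).
    crw (assoc_nat (idm y) (idm d) s). rewrite tens_idl_comp. assocr. reflexivity. }
  rewrite (transpose t), (transpose t'), E. reflexivity.
Qed.

End Duals.

Section IsoPositive.
Context {C : SMDagCat}.

Lemma is_iso_dag {a b} (m : Hom C a b) : is_iso m -> is_iso m†.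
Proof.
  intros [mi [E1 E2]]. exists (mi†).
  rewrite <- !dag_comp, E1, E2. rewrite !dag_id. split; reflexivity.
Qed.

Lemma is_iso_comp {a b c} (f : Hom C a b) (g : Hom C b c) :
  is_iso f -> is_iso g -> is_iso (g ∘ f).
Proof.
  intros [fi [Ef1 Ef2]] [gi [Eg1 Eg2]]. exists (fi ∘ gi). split; assocr.
  - crw Eg1. rewrite comp_idl. exact Ef1.
  - crw Ef2. rewrite comp_idl. exact Eg2.
Qed.

Lemma iso_positive_conj {a b} (h : Hom C b b) (m : Hom C a b) :
  iso_positive h -> is_iso m -> iso_positive (m† ∘ (h ∘ m)).
Proof.
  intros [c' [g [Hg ->]]] Hm. exists c', (g ∘ m). split.
  - apply is_iso_comp; assumption.
  - rewrite dag_comp. assocr. reflexivity.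
Qed.

(* If [l ∘ k = K† ∘ K], then [K ∘ (k ∘ p) ∘ K^-1] is [K^-1† ∘ (l ∘ p) ∘ K^-1]: an
   iso-positive involution. *)
Lemma iso_positive_involution_eq
    (Hinv : forall (c : Ob C) (j : Hom C c c), iso_positive j -> j ∘ j = idm c -> j = idm c)
    {c : Ob C} (l k p : Hom C c c) :
  k ∘ k = idm c -> p ∘ p = idm c -> k ∘ p = p ∘ k ->
  iso_positive (l ∘ k) -> iso_positive (l ∘ p) -> k = p.
Proof.
  intros Hk Hp Hkp [c' [K [[Ki [EK1 EK2]] HlK]]] Hlp.
  assert (HJ : K ∘ (k ∘ (p ∘ Ki)) = Ki† ∘ ((l ∘ p) ∘ Ki)).
  { transitivity (Ki† ∘ ((l ∘ k) ∘ (k ∘ (p ∘ Ki)))).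
    - rewrite HlK. assocr. crwl (dag_comp Ki K). rewrite EK2, dag_id, comp_idl.
      reflexivity.
    - assocr. crw Hk. rewrite comp_idl. reflexivity. }
  assert (HJJ : (K ∘ (k ∘ (p ∘ Ki))) ∘ (K ∘ (k ∘ (p ∘ Ki))) = idm c').
  { assocr. crw EK1. rewrite comp_idl. crwl Hkp. crw Hk. rewrite comp_idl.
    crw Hp. rewrite comp_idl. exact EK2. }
  assert (HJ1 : K ∘ (k ∘ (p ∘ Ki)) = idm c').
  { apply Hinv; [| exact HJJ]. rewrite HJ. apply iso_positive_conj; [exact Hlp |].
    exists K. split; assumption. }
  assert (Hkp1 : k ∘ p = idm c).
  { transitivity (Ki ∘ ((K ∘ (k ∘ (p ∘ Ki))) ∘ K)).
    - assocr. rewrite EK1, comp_idr. crw EK1. rewrite comp_idl. reflexivity.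
    - rewrite HJ1, comp_idl. exact EK1. }
  rewrite <- (comp_idr k), <- Hp, comp_assoc, Hkp1, comp_idl. reflexivity.
Qed.

End IsoPositive.

Section Functor.
Context {C D : SMDagCat} (F : SMDagFunctor C D).

Lemma mu_unitary_l x y : (mu F x y)† ∘ mu F x y = idm _.
Proof. apply mu_unitary. Qed.
Lemma mu_unitary_r x y : mu F x y ∘ (mu F x y)† = idm _.
Proof. apply mu_unitary. Qed.
Lemma eps_unitary_l : (eps F)† ∘ eps F = idm _.
Proof. apply eps_unitary. Qed.
Lemma eps_unitary_r : eps F ∘ (eps F)† = idm _.
Proof. apply eps_unitary. Qed.

Lemma Fm_tensm a b c d (f : Hom C a b) (g : Hom C c d) :
  Fm F (f ⊗ g) = mu F b d ∘ ((Fm F f ⊗ Fm F g) ∘ (mu F a c)†).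
Proof. rewrite comp_assoc. apply (comp_solve_r (mu_unitary_r a c)). apply mu_nat. Qed.

Lemma Fm_runit a : Fm F (runit a) = runit (Fo F a) ∘ ((idm _ ⊗ (eps F)†) ∘ (mu F a unit)†).
Proof.
  apply (comp_solve_r (w := mu F a unit ∘ (idm _ ⊗ eps F))).
  { assocr. tmerge. rewrite eps_unitary_r, tens_id, comp_idl. apply mu_unitary_r. }
  apply F_runit.
Qed.

Lemma Fm_lunit a : Fm F (lunit a) = lunit (Fo F a) ∘ (((eps F)† ⊗ idm _) ∘ (mu F unit a)†).
Proof.
  apply (comp_solve_r (w := mu F unit a ∘ (eps F ⊗ idm _))).
  { assocr. tmerge. rewrite eps_unitary_r, tens_id, comp_idl. apply mu_unitary_r. }
  apply F_lunit.
Qed.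

Lemma Fm_assoc x y z :
  Fm F (assoc x y z) = mu F x (tens y z) ∘ ((idm _ ⊗ mu F y z) ∘
    (assoc _ _ _ ∘ (((mu F x y)† ⊗ idm _) ∘ (mu F (tens x y) z)†))).
Proof.
  transitivity ((mu F x (tens y z) ∘ ((idm _ ⊗ mu F y z) ∘ assoc _ _ _)) ∘
                (((mu F x y)† ⊗ idm _) ∘ (mu F (tens x y) z)†)).
  - apply (comp_solve_r (w := mu F (tens x y) z ∘ (mu F x y ⊗ idm _))).
    { assocr. tmerge. rewrite mu_unitary_r, tens_id, comp_idl. apply mu_unitary_r. }
    rewrite F_assoc. assocr. reflexivity.
  - assocr. reflexivity.
Qed.

Lemma Fm_braid x y : Fm F (braid x y) = mu F y x ∘ (braid _ _ ∘ (mu F x y)†).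
Proof. rewrite comp_assoc. apply (comp_solve_r (mu_unitary_r x y)). apply F_braid. Qed.

Lemma Fm_is_iso a b (f : Hom C a b) : is_iso f -> is_iso (Fm F f).
Proof.
  intros [fi [E1 E2]]. exists (Fm F fi).
  rewrite <- !Fm_comp, E1, E2. rewrite !Fm_id. split; reflexivity.
Qed.

Lemma Fm_iso_positive a (h : Hom C a a) : iso_positive h -> iso_positive (Fm F h).
Proof.
  intros [c' [g [Hg ->]]]. exists (Fo F c'), (Fm F g). split.
  - apply Fm_is_iso, Hg.
  - rewrite Fm_comp, Fm_dag. reflexivity.
Qed.

End Functor.

Ltac simp_mu F := repeat (first [ rewrite (comp_rw2 (mu_unitary_l F _ _))
   | rewrite (mu_unitary_l F _ _) | rewrite (comp_rw2 (mu_unitary_r F _ _))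
   | rewrite (mu_unitary_r F _ _) | rewrite (comp_rw2 (eps_unitary_l F))
   | rewrite (eps_unitary_l F) | rewrite (comp_rw2 (eps_unitary_r F))
   | rewrite (eps_unitary_r F) | rewrite comp_idl | rewrite comp_idr ]).

Ltac Fm_expand F := rewrite ?Fm_comp, ?Fm_dag, ?Fm_tensm, ?Fm_runit, ?Fm_lunit, ?Fm_assoc,
  ?Fm_braid, ?Fm_id, ?Fm_dag; rewrite ?dag_comp, ?dag_tens, ?dag_invol, ?dag_id; assocr.

Section Fermionic.
Context {C : FermCat}.

Lemma lam_par_iso_positive (HC : fermionically_dagger_compact C) (x : Ob C) :
  iso_positive (lam x ∘ par (dualo x)).
Proof.
  assert (Hid : iso_positive (idm x)).
  { exists x, (idm x). split.
    - exists (idm x). split; apply comp_idl.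
    - rewrite dag_id, comp_idl. reflexivity. }
  pose proof (HC x (idm x) Hid (idm _) eq_refl (idm _) (comp_idl _) (comp_idl _)) as H.
  rewrite comp_idl in H. exact H.
Qed.

Lemma ev_par_swap (d y : Ob C) (e : Hom C (tens d y) unit) :
  e ∘ (idm d ⊗ par y) = e ∘ (par d ⊗ idm y).
Proof.
  transitivity (e ∘ ((par d ⊗ par y) ∘ (par d ⊗ idm y))).
  - rewrite tens_comp_merge, par_invol, comp_idr. reflexivity.
  - rewrite <- par_tens, comp_assoc, <- par_nat, par_unit, comp_idl. reflexivity.
Qed.

End Fermionic.

Section FermionicFunctor.
Context {D1 D2 : FermCat} (F : SMDagFunctor D1 D2).

Definition Fcoev (x : Ob D1) : Hom D2 unit (tens (Fo F x) (Fo F (dualo x))) :=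
  (mu F x (dualo x))† ∘ (Fm F (coev x) ∘ eps F).

Definition Fev (x : Ob D1) : Hom D2 (tens (Fo F (dualo x)) (Fo F x)) unit :=
  (eps F)† ∘ (Fm F (ev x) ∘ mu F (dualo x) x).

Lemma Fcoev_snake_l x : snake_l (Fcoev x) (Fev x).
Proof.
  unfold snake_l, Fcoev, Fev. transitivity (Fm F (idm x)); [| apply Fm_id].
  rewrite <- (zigzag_l x). Fm_expand F. simp_mu F.
  rewrite !tens_idl_comp, !tens_idr_comp. assocr. reflexivity.
Qed.

Lemma Fcoev_snake_r x : snake_r (Fcoev x) (Fev x).
Proof.
  unfold snake_r, Fcoev, Fev. transitivity (Fm F (idm (dualo x))); [| apply Fm_id].
  rewrite <- (zigzag_r x). Fm_expand F. simp_mu F.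
  rewrite !tens_idl_comp, !tens_idr_comp. assocr. reflexivity.
Qed.

Lemma Fm_lam x : Fm F (lam x) = lam_of (Fcoev x).
Proof.
  unfold lam, lam_of, Fcoev. Fm_expand F.
  repeat (tmerge; simp_mu F; rewrite ?tens_id; assocr).
  reflexivity.
Qed.

Lemma Fev_par x :
  Fev x ∘ (idm _ ⊗ Fm F (par x)) = Fev x ∘ (Fm F (par (dualo x)) ⊗ idm _).
Proof.
  unfold Fev. assocr.
  rewrite <- (Fm_id F (dualo x)). crwl (mu_nat F (idm (dualo x)) (par x)).
  crwl (Fm_comp F (idm (dualo x) ⊗ par x) (ev x)). rewrite ev_par_swap.
  rewrite Fm_comp, <- (Fm_id F x). assocr. crw (mu_nat F (par (dualo x)) (idm x)).
  reflexivity.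
Qed.

End FermionicFunctor.

Lemma Fm_par_dual {D1 D2 : FermCat}
    (H1 : fermionically_dagger_compact D1) (H2 : fermionically_dagger_compact D2)
    (F : SMDagFunctor D1 D2)
    (Hinv : forall (c : Ob D2) (j : Hom D2 c c),
        iso_positive j -> comp j j = idm c -> j = idm c)
    (x : Ob D1) :
  Fm F (par (dualo x)) = par (Fo F (dualo x)).
Proof.
  set (psi := dual_transfer (Fcoev F x) (ev (Fo F x))).
  assert (Hpsi : is_iso psi).
  { apply (dual_transfer_iso (coev (Fo F x)) (ev (Fo F x)) (Fcoev F x) (Fev F x));
      [apply zigzag_l | apply zigzag_r | apply Fcoev_snake_l | apply Fcoev_snake_r]. }
  assert (HL : Fm F (lam x) = psi ∘ (lam (Fo F x) ∘ psi†)).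
  { rewrite Fm_lam, <- (dual_transfer_coev (coev (Fo F x)) (ev (Fo F x)) (Fcoev F x)).
    - apply lam_of_conj.
    - apply zigzag_l. }
  apply (iso_positive_involution_eq Hinv (Fm F (lam x))).
  - rewrite <- Fm_comp, par_invol. apply Fm_id.
  - apply par_invol.
  - symmetry. apply par_nat.
  - rewrite <- Fm_comp. apply Fm_iso_positive, lam_par_iso_positive, H1.
  - assert (E : psi ∘ (lam (Fo F x) ∘ psi†) ∘ par (Fo F (dualo x))
                = psi†† ∘ ((lam (Fo F x) ∘ par (dualo (Fo F x))) ∘ psi†)).
    { rewrite dag_invol. assocr. rewrite par_nat. reflexivity. }
    rewrite HL, E. apply iso_positive_conj.
    + apply lam_par_iso_positive, H2.
    + apply is_iso_dag, Hpsi.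
Qed.

Theorem mainTheorem1 (D1 D2 : FermCat)
  (H1 : fermionically_dagger_compact D1) (H2 : fermionically_dagger_compact D2)
  (F : SMDagFunctor D1 D2)
  (Hinv : forall (c : Ob D2) (j : Hom D2 c c),
      iso_positive j -> comp j j = idm c -> j = idm c) :
  forall x : Ob D1, Fm F (@par D1 x) = @par D2 (Fo F x).
Proof.
  intro x.
  apply (ev_tens_inj (Fcoev F x) (Fev F x)); [apply Fcoev_snake_l |].
  rewrite Fev_par, (Fm_par_dual H1 H2 F Hinv x). symmetry. apply ev_par_swap.
Qed.
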